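(* Let $P,P',Q,S,\gamma$ be programs and $B$ a Boolean expression such that $P'\equiv_B(P,B)$ and $Q\equiv_B(P,\neg B)$. If the operational triple $\{|P'|\}\ S\ \{|\gamma;P|\}$ holds, then $\{|P|\}\ \mathbf{while}\ (B)\ \mathbf{do}\ S\ \mathbf{elihw}\ \{|Q|\}$ holds.
   Context: Programs are statements of a sequential imperative language with a standard small-step operational semantics over program states. $\mathrm{behs}(P)$ is the set of pairs (initial state, final state) of finite terminating executions of $P$; $(s,u)\in\mathrm{behs}(P;Q)$ iff there is $t$ with $(s,t)\in\mathrm{behs}(P)$ and $(t,u)\in\mathrm{behs}(Q)$. For a state $s$ and Boolean expression $B$, $s(B)\in\{\mathit{tt},\mathit{ff}\}$ is the (side-effect-free) value of $B$ in $s$. The loop $\mathbf{while}\ (B)\ \mathbf{do}\ S\ \mathbf{elihw}$ started in state $s$ terminates in $s$ if $s(B)=\mathit{ff}$, and otherwise executes $S$ and then repeats the loop from the resulting state. The post-state set is $\mathrm{pst}(P)=\{t:\exists s,\ (s,t)\in\mathrm{behs}(P)\}$. The operational triple $\{|P|\}\ S\ \{|Q|\}$ means $\mathrm{pst}(P;S)\subseteq\mathrm{pst}(Q)$. For programs $P',P$ and Boolean expression $B$, $P'\equiv_B(P,B)$ means $\mathrm{pst}(P')=\mathrm{pst}(P)\cap\{s : s(B)=\mathit{tt}\}$. *)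

From Stdlib Require Import ZArith Relations.

Definition var := nat.
Definition state := var -> Z.
Definition aexp := state -> Z.
Definition bexp := state -> bool.

Definition bnot (B : bexp) : bexp := fun s => negb (B s).

Definition update (s : state) (x : var) (v : Z) : state :=
  fun y => if Nat.eqb y x then v else s y.

Inductive stmt : Type :=
| Skip : stmt
| Assign : var -> aexp -> stmt
| Havoc : var -> stmt
| Seq : stmt -> stmt -> stmt
| If : bexp -> stmt -> stmt -> stmt
| While : bexp -> stmt -> stmt.

Inductive step : stmt * state -> stmt * state -> Prop :=
| st_assign : forall x a s, step (Assign x a, s) (Skip, update s x (a s))
| st_havoc : forall x v s, step (Havoc x, s) (Skip, update s x v)
| st_seq_skip : forall c s, step (Seq Skip c, s) (c, s)
| st_seq : forall c1 c1' c2 s s',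
    step (c1, s) (c1', s') -> step (Seq c1 c2, s) (Seq c1' c2, s')
| st_if_true : forall b c1 c2 s, b s = true -> step (If b c1 c2, s) (c1, s)
| st_if_false : forall b c1 c2 s, b s = false -> step (If b c1 c2, s) (c2, s)
| st_while : forall b c s,
    step (While b c, s) (If b (Seq c (While b c)) Skip, s).

Definition steps := clos_refl_trans (stmt * state) step.

Definition behs (P : stmt) (s t : state) : Prop := steps (P, s) (Skip, t).

Definition pst (P : stmt) (t : state) : Prop := exists s, behs P s t.

Definition op_triple (P S Q : stmt) : Prop :=
  forall t, pst (Seq P S) t -> pst Q t.

Definition equiv_B (P' P : stmt) (B : bexp) : Prop :=
  forall t, pst P' t <-> (pst P t /\ B t = true).

(* Through the equivalent big-step semantics, a terminating run of the loop
   from a state of pst(P) is a finite sequence of runs of S from states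
   satisfying B, ending in a state falsifying B.  The hypotheses make pst(P)
   invariant under such a run of S: a state of pst(P) satisfying B lies in
   pst(P'), so after S it lies in pst(gamma;P) and hence in pst(P).  The
   final state is therefore in pst(P) and falsifies B, i.e. lies in pst(Q). *)
From Stdlib Require Import Relations.

Inductive exec : stmt -> state -> state -> Prop :=
| exec_skip : forall s, exec Skip s s
| exec_assign : forall x a s, exec (Assign x a) s (update s x (a s))
| exec_havoc : forall x v s, exec (Havoc x) s (update s x v)
| exec_seq : forall c1 c2 s t u,
    exec c1 s t -> exec c2 t u -> exec (Seq c1 c2) s u
| exec_if_true : forall b c1 c2 s t,
    b s = true -> exec c1 s t -> exec (If b c1 c2) s t
| exec_if_false : forall b c1 c2 s t,
    b s = false -> exec c2 s t -> exec (If b c1 c2) s t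
| exec_while_false : forall b c s, b s = false -> exec (While b c) s s
| exec_while_true : forall b c s t u,
    b s = true -> exec c s t -> exec (While b c) t u -> exec (While b c) s u.

Lemma step_exec p q u : step p q -> exec (fst q) (snd q) u -> exec (fst p) (snd p) u.
Proof.
  intros Hstep; revert u; induction Hstep; simpl; intros u E.
  - inversion E; subst; constructor.
  - inversion E; subst; constructor.
  - econstructor; [constructor | exact E].
  - inversion E; subst; econstructor; [apply IHHstep; eassumption | eassumption].
  - apply exec_if_true; assumption.
  - apply exec_if_false; assumption.
  - inversion E as [| | | | ? ? ? ? ? Hb Ebody | ? ? ? ? ? Hb Eskip | |]; subst.
    + inversion Ebody; subst; eapply exec_while_true; eassumption.
    + inversion Eskip; subst; apply exec_while_false; assumption.
Qed.

Lemma behs_exec c s t : behs c s t -> exec c s t.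
Proof.
  unfold behs, steps; intros H; apply clos_rt_rt1n in H.
  remember (c, s) as p eqn:Ep; remember (Skip, t) as q eqn:Eq.
  revert c s Ep; induction H as [p | p [c' s'] q Hstep _ IH]; intros c s Ep; subst.
  - injection Ep as <- <-; constructor.
  - apply (step_exec _ _ _ Hstep), (IH eq_refl c' s' eq_refl).
Qed.

Lemma steps_seq_l c1 c2 s t :
  steps (c1, s) (Skip, t) -> steps (Seq c1 c2, s) (Seq Skip c2, t).
Proof.
  unfold steps; intros H; apply clos_rt_rt1n in H.
  remember (c1, s) as p eqn:Ep; remember (Skip, t) as q eqn:Eq.
  revert c1 s Ep; induction H as [p | p [c' s'] q Hstep _ IH]; intros c1 s Ep; subst.
  - injection Ep as <- <-; apply rt_refl.
  - eapply rt_trans; [apply rt_step, st_seq, Hstep | exact (IH eq_refl c' s' eq_refl)].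
Qed.

Lemma behs_seq c1 c2 s t u : behs c1 s t -> behs c2 t u -> behs (Seq c1 c2) s u.
Proof.
  intros H1 H2.
  eapply rt_trans; [apply steps_seq_l, H1 |].
  eapply rt_trans; [apply rt_step, st_seq_skip | exact H2].
Qed.

Lemma exec_behs c s t : exec c s t -> behs c s t.
Proof.
  intros E; induction E.
  - apply rt_refl.
  - apply rt_step; constructor.
  - apply rt_step; constructor.
  - eapply behs_seq; eassumption.
  - eapply rt_trans; [apply rt_step, st_if_true | ]; eassumption.
  - eapply rt_trans; [apply rt_step, st_if_false | ]; eassumption.
  - eapply rt_trans; [apply rt_step, st_while |].
    apply rt_step, st_if_false; assumption.
  - eapply rt_trans; [apply rt_step, st_while |].
    eapply rt_trans; [apply rt_step, st_if_true; assumption |].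
    eapply behs_seq; eassumption.
Qed.

Lemma behs_exec_iff c s t : behs c s t <-> exec c s t.
Proof. split; [apply behs_exec | apply exec_behs]. Qed.

Lemma pst_seq c1 c2 t : pst (Seq c1 c2) t <-> exists s, pst c1 s /\ exec c2 s t.
Proof.
  unfold pst; setoid_rewrite behs_exec_iff; split.
  - intros [s0 E]; inversion E; subst; eauto.
  - intros [s [[s0 E1] E2]]; exists s0; econstructor; eassumption.
Qed.

Lemma pst_seq_r c1 c2 t : pst (Seq c1 c2) t -> pst c2 t.
Proof.
  intros [s0 E]; apply behs_exec in E; inversion E; subst.
  eexists; apply exec_behs; eassumption.
Qed.

Lemma op_triple_exec P S Q :
  op_triple P S Q <-> forall s t, pst P s -> exec S s t -> pst Q t.
Proof.
  unfold op_triple; split.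
  - intros H s t Hs E; apply H, pst_seq; eauto.
  - intros H t Ht; apply pst_seq in Ht as [s [Hs E]]; eauto.
Qed.

Lemma exec_while_inv (I : state -> Prop) B S s u :
  (forall s t, I s -> B s = true -> exec S s t -> I t) ->
  exec (While B S) s u -> I s -> I u /\ B u = false.
Proof.
  intros Hbody E; remember (While B S) as w eqn:Ew.
  induction E; try discriminate; injection Ew as -> ->; intros Hs.
  - split; assumption.
  - apply IHE2; [reflexivity | eapply Hbody; eassumption].
Qed.

Theorem theorem2 (P P' Q S gamma : stmt) (B : bexp) :
  equiv_B P' P B ->
  equiv_B Q P (bnot B) ->
  op_triple P' S (Seq gamma P) ->
  op_triple P (While B S) Q.
Proof.
  intros HP' HQ HS.
  assert (Hinv : forall s t, pst P s -> B s = true -> exec S s t -> pst P t).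
  { intros s t Hs HBs E.
    apply (pst_seq_r gamma).
    apply (proj1 (op_triple_exec _ _ _) HS s); [apply HP'; split |]; assumption. }
  apply op_triple_exec; intros s u Hs E.
  destruct (exec_while_inv _ _ _ _ _ Hinv E Hs) as [HPu HBu].
  apply HQ; split; [assumption | unfold bnot; rewrite HBu; reflexivity].
Qed.
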